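(* Let $\widetilde{\eta}\in\mathbf{R}$ with $|\widetilde\eta|$ large, let $\lambda>0$, and define $$\mathfrak{g}(a,\tau,\widetilde{\eta},\lambda):=-\lambda a+\frac{2\widetilde{\eta}^2(1-\tau)}{\tau}+\frac{2-\tau}{2a^2\tau^2}.$$ Let $$\Omega:=\Bigl[0,\tfrac{1}{3\sqrt3}-\tfrac{\mathrm{i}}{3}\Bigr]\cup\Bigl(\tfrac{1}{3\sqrt3}-\tfrac{\mathrm{i}}{3},1-\tfrac{1}{3\sqrt3}-\tfrac{\mathrm{i}}{3}\Bigr]\cup\Bigl(1-\tfrac{1}{3\sqrt3}-\tfrac{\mathrm{i}}{3},1\Bigr]$$ (traversed from $0$ to $1$) and $$\Lambda:=[0,z_0]\cup\bigl(z_0,z_0+e^{3\mathrm{i}\pi/5}\infty\bigr),\qquad z_0:=\frac{\sin(4\pi/15)}{\sin(17\pi/30)}e^{\mathrm{i}\pi/6},$$ and, for a fixed large constant $C>0$, set $$\widetilde\Omega:=\{\tau\in\Omega:|\tau|\le C|\widetilde{\eta}|^{-1/2}\},\qquad \widetilde\Lambda:=\{a\in\Lambda:|a|\le|\widetilde{\eta}|^{-1/2}\}.$$ Then for any large constant $C_0>0$, any fixed $\gamma\in\mathbf{R}$ and any $C_0^{-1}\le\lambda\le C_0$, $$\int_{\Omega\setminus\widetilde\Omega}\tau^{-\gamma}e^{\mathfrak{g}(a,1,\widetilde{\eta},\lambda)-\mathfrak{g}(a,\tau,\widetilde{\eta},\lambda)}\,\mathrm{d}\tau=\frac{1}{2\widetilde{\eta}^2}+\mathcal{O}\bigl(|\widetilde{\eta}|^{-3}\bigr)$$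 uniformly in $a\in\Lambda\setminus\widetilde\Lambda$, where the implicit constant in $\mathcal{O}(\cdot)$ depends on $C_0$.
   Context: $\tau^{-\gamma}$ denotes the principal branch. The function $\mathfrak{g}$ is the phase function of the limiting one-point function of the shifted real Ginibre ensemble at the edge ($\widetilde\delta=0$); note that $\mathfrak{g}(a,1,\widetilde\eta,\lambda)-\mathfrak{g}(a,\tau,\widetilde\eta,\lambda)=-\frac{2\widetilde\eta^2(1-\tau)}{\tau}+\frac{\tau^2+\tau-2}{2a^2\tau^2}$. The asymptotic statement is as $|\widetilde\eta|\to\infty$. *)

From Stdlib Require Import Reals.
From Coquelicot Require Import Coquelicot.
Open Scope R_scope.

Definition cexp (z : C) : C :=
  (exp (Re z) * cos (Im z), exp (Re z) * sin (Im z)).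

(* principal argument, with values in (-PI, PI]; Carg 0 = 0 *)
Definition Carg (z : C) : R :=
  let x := Re z in let y := Im z in
  if Rlt_dec 0 x then atan (y / x)
  else if Rlt_dec x 0 then
    (if Rle_dec 0 y then atan (y / x) + PI else atan (y / x) - PI)
  else if Rlt_dec 0 y then PI / 2
  else if Rlt_dec y 0 then - (PI / 2)
  else 0.

Definition Clog (z : C) : C := (ln (Cmod z), Carg z).

Definition cpow_pr (z w : C) : C := cexp (Cmult w (Clog z)).

Definition gfrak (a tau : C) (eta lam : R) : C :=
  Cplus (Cplus (Cmult (RtoC (- lam)) a)
               (Cdiv (Cmult (RtoC (2 * eta ^ 2)) (Cminus (RtoC 1) tau)) tau))
        (Cdiv (Cminus (RtoC 2) tau)
              (Cmult (RtoC 2) (Cmult (Cmult a a) (Cmult tau tau)))).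

(* The contour integral of f over the part of the oriented segment [p, q]
   lying in the region {z : |z| > rho}:
     int_{[p,q] ∩ {|z|>rho}} f(z) dz
       = (q - p) * int_0^1 1_{|p + s(q-p)| > rho} f(p + s(q-p)) ds. *)
Definition seg_int_outside (f : C -> C) (rho : R) (p q : C) : C :=
  Cmult (Cminus q p)
    (RInt (V := C_R_CompleteNormedModule)
       (fun s : R => let z := Cplus p (Cmult (RtoC s) (Cminus q p)) in
                     if Rlt_dec rho (Cmod z) then f z else RtoC 0) 0 1).

(* vertices of the contour Omega: 0 -> P1 -> P2 -> 1 *)
Definition OmP1 : C := (1 / (3 * sqrt 3), - (1 / 3)).
Definition OmP2 : C := (1 - 1 / (3 * sqrt 3), - (1 / 3)).

Definition Omega_int_outside (f : C -> C) (rho : R) : C :=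
  Cplus (Cplus (seg_int_outside f rho (RtoC 0) OmP1)
               (seg_int_outside f rho OmP1 OmP2))
        (seg_int_outside f rho OmP2 (RtoC 1)).

Definition z0 : C :=
  Cmult (RtoC (sin (4 * PI / 15) / sin (17 * PI / 30)))
        (cos (PI / 6), sin (PI / 6)).

Definition in_Lambda (a : C) : Prop :=
  (exists t : R, 0 <= t <= 1 /\ a = Cmult (RtoC t) z0) \/
  (exists s : R, 0 < s /\ a = Cplus z0 (Cmult (RtoC s) (cos (3 * PI / 5), sin (3 * PI / 5)))).

(* With k = 2 eta^2 and b = 1 / (2 a^2), lambda cancels and
   g(a,1) - g(a,tau) = b (1 + 1/tau - 2/tau^2) - k (1/tau - 1).  Put
   Phi = (2 - gamma) Log tau + g(a,1) - g(a,tau).  Then Phi' = Q + k/tau^2 with Q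
   independent of k, so the integrand tau^-gamma e^(g(a,1) - g(a,tau)) = e^Phi / tau^2
   equals (e^Phi)'/k - e^Phi Q / k.  The exact part integrates to (1 - e^Phi(tau0)) / k
   between the circle |tau| = C |eta|^-1/2 and 1, and 1/k is the main term.
   Since |a| > |eta|^-1/2 gives |b| <= |eta|/2, Re Phi is dominated by
   -k (Re(1/tau) - 1), which on Omega is <= -c eta^2 / |tau| near 0, <= -c eta^2 on
   the horizontal edge and <= -c eta^2 (1 - s) on the last edge.  So the boundary
   term at tau0 and the remainder on the first two edges are tiny, and on the last edge
   |Q| / k = O(|eta|^-1) integrates against e^(-c eta^2 (1 - s)) to O(|eta|^-3). *)

From Stdlib Require Import Reals Lra Psatz.
From Coquelicot Require Import Coquelicot.
Open Scope R_scope.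

Lemma exp_le_exp (x y : R) : x <= y -> exp x <= exp y.
Proof. intros [H|H]; [now apply Rlt_le, exp_increasing | rewrite H; apply Rle_refl]. Qed.

Lemma ln_le_sub_1 (x : R) : 0 < x -> ln x <= x - 1.
Proof.
  intro Hx; apply Rnot_lt_le; intro H; apply exp_increasing in H.
  rewrite exp_ln in H by exact Hx; pose proof (exp_ineq1_le (x - 1)); lra.
Qed.

Lemma ln_sqrt (x : R) : 0 < x -> ln (sqrt x) = ln x / 2.
Proof.
  intro Hx; assert (Hs : 0 < sqrt x) by now apply sqrt_lt_R0.
  rewrite <- (sqrt_sqrt x) at 2 by lra; rewrite ln_mult by exact Hs; field.
Qed.

Lemma exp_neg_le (y : R) : 0 < y -> exp (- y) <= 27 / y ^ 3.
Proof.
  intro Hy.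
  assert (H3 : (y / 3) ^ 3 <= exp (y / 3) ^ 3)
    by (apply pow_incr; pose proof (exp_ineq1_le (y / 3)); lra).
  assert (E : exp (y / 3) ^ 3 = exp y).
  { replace (exp y) with (exp (y / 3 + y / 3 + y / 3)) by (f_equal; field).
    rewrite !exp_plus; ring. }
  rewrite E in H3; rewrite exp_Ropp.
  replace (27 / y ^ 3) with (/ ((y / 3) ^ 3)) by (field; lra).
  apply Rinv_le_contravar; [apply pow_lt; lra | exact H3].
Qed.

Lemma mul_le_abs_mul (x y : R) : x * y <= Rabs x * Rabs y.
Proof. rewrite <- Rabs_mult; apply Rle_abs. Qed.

Lemma Rabs_ln_le (m lo : R) : 0 < lo <= m -> m <= 1 -> Rabs (ln m) <= / lo - 1.
Proof.
  intros Hm Hm1; pose proof (ln_le_sub_1 m ltac:(lra)) as H1.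
  pose proof (ln_le_sub_1 (/ m) ltac:(apply Rinv_0_lt_compat; lra)) as H2.
  rewrite ln_Rinv in H2 by lra.
  assert (/ m <= / lo) by (apply Rinv_le_contravar; lra).
  apply Rabs_le; lra.
Qed.

Lemma Rpower_neg_half (x : R) : 0 < x -> Rpower x (- (1 / 2)) = / sqrt x.
Proof.
  intro Hx; rewrite Rpower_Ropp; replace (1 / 2) with (/ 2) by field.
  now rewrite Rpower_sqrt.
Qed.

Lemma Rpower_neg_3 (x : R) : 0 < x -> Rpower x (-3) = / x ^ 3.
Proof.
  intro Hx; replace (-3) with (- INR 3) by (simpl; ring).
  now rewrite Rpower_Ropp, Rpower_pow.
Qed.

Lemma is_derive_ext_deriv (f : R -> R) (x l l' : R) :
  l = l' -> is_derive f x l -> is_derive f x l'.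
Proof. now intros <-. Qed.

Lemma is_derive_Rmult (u v : R -> R) (x du dv : R) :
  is_derive u x du -> is_derive v x dv -> is_derive (fun s => u s * v s) x (du * v x + u x * dv).
Proof. intros Hu Hv; exact (is_derive_mult u v x du dv Hu Hv (fun n m => Rmult_comm n m)). Qed.

Lemma Cmod_pair (x y : R) : Cmod (x, y) = sqrt (x ^ 2 + y ^ 2).
Proof. reflexivity. Qed.

Lemma fst_Cinv_pair (x y : R) : fst (/ (x, y))%C = x / (x ^ 2 + y ^ 2).
Proof. reflexivity. Qed.

Lemma fst_pos_neq_0 (z : C) : 0 < fst z -> z <> 0%C.
Proof. intros H E; rewrite E in H; simpl in H; lra. Qed.

Lemma RtoC_neq_0 (x : R) : x <> 0 -> RtoC x <> 0%C.
Proof. intros Hx E; apply Hx; exact (f_equal fst E). Qed.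

Lemma Cminus_neq_0 (p q : C) : p <> q -> (q - p)%C <> 0%C.
Proof. intros Hpq E; apply Hpq; replace q with (p + (q - p))%C by ring; rewrite E; ring. Qed.

Lemma fst_le_Cmod (z : C) : fst z <= Cmod z.
Proof. pose proof (re_le_Cmod z); unfold Re in *; pose proof (Rle_abs (fst z)); lra. Qed.

Lemma Cmod_Cminus_le (x y : C) : Cmod (x - y) <= Cmod x + Cmod y.
Proof. unfold Cminus; rewrite <- (Cmod_opp y); apply Cmod_triangle. Qed.

Lemma Cmod_pair_bounds (x y lo : R) : 0 <= lo -> lo ^ 2 <= x ^ 2 + y ^ 2 <= 1 ->
  lo <= Cmod (x, y) <= 1.
Proof.
  intros Hlo HN; rewrite Cmod_pair; split.
  - rewrite <- (sqrt_pow2 lo) by exact Hlo; apply sqrt_le_1_alt; lra.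
  - rewrite <- sqrt_1; apply sqrt_le_1_alt; lra.
Qed.

Lemma fst_Cinv_pair_sub_1_ge (x y : R) : 0 < x ^ 2 + y ^ 2 <= 1 -> x ^ 2 + y ^ 2 <= x ->
  x - (x ^ 2 + y ^ 2) <= fst (/ (x, y))%C - 1.
Proof.
  intros HN Hx; rewrite fst_Cinv_pair; set (N := x ^ 2 + y ^ 2) in *.
  replace (x / N - 1) with ((x - N) * / N) by (field; lra).
  rewrite <- (Rmult_1_r (x - N)) at 1; apply Rmult_le_compat_l; [lra|].
  rewrite <- Rinv_1; apply Rinv_le_contravar; lra.
Qed.

Lemma cexp_plus (u v : C) : cexp (u + v) = (cexp u * cexp v)%C.
Proof.
  unfold cexp, Re, Im; simpl; rewrite exp_plus, cos_plus, sin_plus.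
  apply injective_projections; simpl; ring.
Qed.

Lemma Cmod_cexp (z : C) : Cmod (cexp z) = exp (fst z).
Proof.
  unfold cexp, Cmod, Re, Im; cbn [fst snd].
  replace ((exp (fst z) * cos (snd z)) ^ 2 + (exp (fst z) * sin (snd z)) ^ 2)
    with (exp (fst z) ^ 2) by (pose proof (sin2_cos2 (snd z)); unfold Rsqr in *; nra).
  apply sqrt_pow2, Rlt_le, exp_pos.
Qed.

(* [Clog] on the half-plane Re z > 0 (see [Clog_rhp_eq]), in a closed form without
   case splits that can be differentiated. *)
Definition Clog_rhp (z : C) : C := (ln (fst z ^ 2 + snd z ^ 2) / 2, atan (snd z / fst z)).

Lemma Cmod2_pos (z : C) : 0 < fst z -> 0 < fst z ^ 2 + snd z ^ 2.
Proof. intro H; nra. Qed.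

Lemma Clog_rhp_eq (z : C) : 0 < fst z -> Clog z = Clog_rhp z.
Proof.
  intro H; unfold Clog, Clog_rhp, Carg, Cmod, Re, Im.
  rewrite ln_sqrt by now apply Cmod2_pos.
  now destruct (Rlt_dec 0 (fst z)).
Qed.

Lemma fst_Clog_rhp (z : C) : z <> 0%C -> fst (Clog_rhp z) = ln (Cmod z).
Proof.
  intro Hz; unfold Clog_rhp, Cmod; simpl; rewrite ln_sqrt; [reflexivity|].
  assert (fst z ^ 2 + snd z ^ 2 <> 0) by (intro E; apply Hz, injective_projections; simpl; nra).
  nra.
Qed.

Lemma cexp_Clog_rhp (z : C) : 0 < fst z -> cexp (Clog_rhp z) = z.
Proof.
  destruct z as [x y]; simpl; intro Hx.
  assert (HN : 0 < x ^ 2 + y ^ 2) by nra.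
  assert (Hs : 0 < sqrt (x ^ 2 + y ^ 2)) by now apply sqrt_lt_R0.
  assert (E1 : exp (ln (x ^ 2 + y ^ 2) / 2) = sqrt (x ^ 2 + y ^ 2))
    by (rewrite <- ln_sqrt by exact HN; now apply exp_ln).
  assert (E2 : sqrt (1 + (y / x)²) = sqrt (x ^ 2 + y ^ 2) / x).
  { replace (1 + (y / x)²) with ((x ^ 2 + y ^ 2) / (x * x)) by (unfold Rsqr; field; lra).
    rewrite sqrt_div_alt, sqrt_square by nra; reflexivity. }
  unfold cexp, Clog_rhp, Re, Im; cbn [fst snd]; rewrite E1, cos_atan, sin_atan, E2.
  apply injective_projections; cbn [fst snd]; field; split; lra.
Qed.

(** * Differentiation of curves in the complex plane *)

(* Coquelicot sees C only as an R-module, so the rules for complex products are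
   proved componentwise. *)
Definition is_Cderive (f : R -> C) (x : R) (l : C) : Prop :=
  is_derive (fun y => fst (f y)) x (fst l) /\ is_derive (fun y => snd (f y)) x (snd l).

Lemma is_Cderive_is_derive (f : R -> C) (x : R) (l : C) :
  is_Cderive f x l -> is_derive (V := C_R_CompleteNormedModule) f x l.
Proof.
  intros [H1 H2]; destruct l as [l1 l2]; unfold is_derive in *.
  refine (@filterdiff_ext_lin R_AbsRing R_NormedModule C_R_NormedModule _ _ _
            (fun y : R => ((scal y l1 : R), (scal y l2 : R)) : C) _ _ _); [| now intros y].
  refine (@filterdiff_ext R_AbsRing R_NormedModule C_R_NormedModule _ _
            (fun y => ((fst (f y), snd (f y)) : C)) _ _ _ _); [now intros y; destruct (f y)|].
  apply (filterdiff_comp_2 (K := R_AbsRing) (U := R_NormedModule) (V := R_NormedModule)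
           (W := C_R_NormedModule) _ _ (fun u v => ((u, v) : C)) _ _
           (fun u v => ((u, v) : C)) H1 H2).
  apply filterdiff_linear; split.
  - now intros [? ?] [? ?].
  - now intros ? [? ?].
  - exists 1; split; [lra|]. intros [u v]; simpl; rewrite Rmult_1_l; apply Rle_refl.
Qed.

Lemma is_Cderive_continuous (f : R -> C) (x : R) (l : C) :
  is_Cderive f x l -> continuous f x.
Proof.
  intro H; apply (ex_derive_continuous (V := C_R_CompleteNormedModule)).
  exists l; exact (is_Cderive_is_derive f x l H).
Qed.

Lemma is_Cderive_ext_deriv (f : R -> C) (x : R) (l l' : C) :
  l = l' -> is_Cderive f x l -> is_Cderive f x l'.
Proof. now intros <-. Qed.

Lemma is_Cderive_const (c : C) (x : R) : is_Cderive (fun _ => c) x 0.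
Proof. split; [apply (is_derive_const (fst c)) | apply (is_derive_const (snd c))]. Qed.

Lemma is_Cderive_plus (f g : R -> C) (x : R) (a b : C) :
  is_Cderive f x a -> is_Cderive g x b -> is_Cderive (fun s => f s + g s)%C x (a + b)%C.
Proof.
  intros [Hf1 Hf2] [Hg1 Hg2]; split;
    [exact (is_derive_plus _ _ _ _ _ Hf1 Hg1) | exact (is_derive_plus _ _ _ _ _ Hf2 Hg2)].
Qed.

Lemma is_Cderive_opp (f : R -> C) (x : R) (a : C) :
  is_Cderive f x a -> is_Cderive (fun s => - f s)%C x (- a)%C.
Proof.
  intros [Hf1 Hf2]; split; [exact (is_derive_opp _ _ _ Hf1) | exact (is_derive_opp _ _ _ Hf2)].
Qed.

Lemma is_Cderive_minus (f g : R -> C) (x : R) (a b : C) :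
  is_Cderive f x a -> is_Cderive g x b -> is_Cderive (fun s => f s - g s)%C x (a - b)%C.
Proof. intros Hf Hg; apply is_Cderive_plus; [exact Hf | now apply is_Cderive_opp]. Qed.

Lemma is_Cderive_mult (f g : R -> C) (x : R) (a b : C) :
  is_Cderive f x a -> is_Cderive g x b ->
  is_Cderive (fun s => f s * g s)%C x (a * g x + f x * b)%C.
Proof.
  intros [Hf1 Hf2] [Hg1 Hg2].
  split; simpl.
  - replace (fst a * fst (g x) - snd a * snd (g x) + (fst (f x) * fst b - snd (f x) * snd b))
      with ((fst a * fst (g x) + fst (f x) * fst b) - (snd a * snd (g x) + snd (f x) * snd b))
      by ring.
    exact (is_derive_minus _ _ _ _ _ (is_derive_Rmult _ _ _ _ _ Hf1 Hg1)
             (is_derive_Rmult _ _ _ _ _ Hf2 Hg2)).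
  - replace (fst a * snd (g x) + snd a * fst (g x) + (fst (f x) * snd b + snd (f x) * fst b))
      with ((fst a * snd (g x) + fst (f x) * snd b) + (snd a * fst (g x) + snd (f x) * fst b))
      by ring.
    exact (is_derive_plus _ _ _ _ _ (is_derive_Rmult _ _ _ _ _ Hf1 Hg2)
             (is_derive_Rmult _ _ _ _ _ Hf2 Hg1)).
Qed.

Lemma is_Cderive_inv (f : R -> C) (x : R) (l : C) :
  f x <> 0%C -> is_Cderive f x l -> is_Cderive (fun s => / f s)%C x (- l / (f x * f x))%C.
Proof.
  intros Hx [H1 H2].
  assert (Hn : fst (f x) ^ 2 + snd (f x) ^ 2 <> 0).
  { intro E; apply Hx; apply injective_projections; simpl; nra. }
  assert (HN := is_derive_plus _ _ _ _ _ (is_derive_pow _ 2 _ _ H1) (is_derive_pow _ 2 _ _ H2)).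
  assert (Hn2 : (fst (f x) * fst (f x) - snd (f x) * snd (f x)) ^ 2
                + (fst (f x) * snd (f x) + snd (f x) * fst (f x)) ^ 2 <> 0).
  { intro E; apply Hn; nra. }
  split.
  - eapply is_derive_ext_deriv; [| exact (is_derive_div _ _ _ _ _ H1 HN Hn)].
    cbn; field; split; intro E; [apply Hn2 | apply Hn]; nra.
  - eapply is_derive_ext_deriv; [| exact (is_derive_div _ _ _ _ _ (is_derive_opp _ _ _ H2) HN Hn)].
    cbn; field; split; intro E; [apply Hn2 | apply Hn]; nra.
Qed.

Lemma is_Cderive_cexp (f : R -> C) (x : R) (l : C) :
  is_Cderive f x l -> is_Cderive (fun s => cexp (f s)) x (cexp (f x) * l)%C.
Proof.
  intros [H1 H2].
  assert (HE := is_derive_comp _ _ _ _ _ (is_derive_exp (fst (f x))) H1).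
  assert (HC := is_derive_comp _ _ _ _ _ (is_derive_cos (snd (f x))) H2).
  assert (HS := is_derive_comp _ _ _ _ _ (is_derive_sin (snd (f x))) H2).
  split.
  - eapply is_derive_ext_deriv; [| exact (is_derive_Rmult _ _ _ _ _ HE HC)].
    unfold cexp, Re, Im; cbn; ring.
  - eapply is_derive_ext_deriv; [| exact (is_derive_Rmult _ _ _ _ _ HE HS)].
    unfold cexp, Re, Im; cbn; ring.
Qed.

Lemma is_Cderive_affine (p d : C) (x : R) : is_Cderive (fun s => p + s * d)%C x d.
Proof. split; simpl; auto_derive; auto; ring. Qed.

Lemma is_Cderive_Clog_rhp (f : R -> C) (x : R) (l : C) :
  0 < fst (f x) -> is_Cderive f x l -> is_Cderive (fun s => Clog_rhp (f s)) x (l / f x)%C.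
Proof.
  intros Hx [H1 H2].
  assert (HN := is_derive_plus _ _ _ _ _ (is_derive_pow _ 2 _ _ H1) (is_derive_pow _ 2 _ _ H2)).
  assert (Hp := Cmod2_pos _ Hx).
  assert (HL := is_derive_comp ln (fun y => fst (f y) ^ 2 + snd (f y) ^ 2) _ _ _
                  (is_derive_ln _ Hp) HN).
  assert (HQ := is_derive_div _ _ _ _ _ H2 H1 (Rgt_not_eq _ _ Hx)).
  assert (HA := is_derive_comp atan (fun y => snd (f y) / fst (f y)) _ _ _ (is_derive_atan _) HQ).
  split.
  - eapply is_derive_ext_deriv;
      [| exact (is_derive_div _ _ _ _ _ HL (is_derive_const 2 x) (Rgt_not_eq 2 0 Rlt_0_2))].
    cbn; field; nra.
  - eapply is_derive_ext_deriv; [| exact HA].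
    cbn; unfold Rsqr; field; nra.
Qed.

Lemma C_minus_eq (u v : C) : minus (G := C_AbelianGroup) u v = (u - v)%C.
Proof. reflexivity. Qed.

(* [is_RInt_const] yields [scal (hi - lo) 0], which is not syntactically [0]. *)
Lemma is_RInt_C0 (lo hi : R) :
  is_RInt (V := C_R_CompleteNormedModule) (fun _ => RtoC 0) lo hi (RtoC 0).
Proof.
  pose proof (is_RInt_const (V := C_R_CompleteNormedModule) lo hi (RtoC 0)) as H.
  match type of H with is_RInt _ _ _ ?v => replace v with (RtoC 0) in H end; [exact H|].
  apply injective_projections; exact (eq_sym (Rmult_0_r _)).
Qed.

Lemma RInt_Cmod_le (f : R -> C) (g : R -> R) (lo hi lg : R) : lo <= hi ->
  ex_RInt (V := C_R_CompleteNormedModule) f lo hi ->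
  (forall s, lo <= s <= hi -> Cmod (f s) <= g s) -> is_RInt g lo hi lg ->
  Cmod (RInt (V := C_R_CompleteNormedModule) f lo hi) <= lg.
Proof.
  intros Hlh Hf Hb Hg; rewrite Cmod_norm.
  apply (norm_RInt_le (V := C_R_NormedModule) f g lo hi); auto.
  - intros x Hx; rewrite <- Cmod_norm; auto.
  - exact (RInt_correct _ _ _ Hf).
Qed.

Lemma RInt_Cmod_le_const (f : R -> C) (lo hi M : R) : lo <= hi ->
  ex_RInt (V := C_R_CompleteNormedModule) f lo hi ->
  (forall s, lo <= s <= hi -> Cmod (f s) <= M) ->
  Cmod (RInt (V := C_R_CompleteNormedModule) f lo hi) <= (hi - lo) * M.
Proof.
  intros Hlh Hf Hb; apply (RInt_Cmod_le f (fun _ => M)); auto.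
  apply (is_RInt_const (V := R_NormedModule)).
Qed.

Lemma is_RInt_exp_decay (c : R) : 0 < c ->
  is_RInt (fun s => exp (- (c * (1 - s)))) 0 1 ((1 - exp (- c)) / c).
Proof.
  intro Hc.
  assert (H : is_RInt (fun s => exp (- (c * (1 - s)))) 0 1
                (exp (- (c * (1 - 1))) / c - exp (- (c * (1 - 0))) / c)).
  { apply (is_RInt_derive (fun s => exp (- (c * (1 - s))) / c)); intros x _.
    - auto_derive; [auto | unfold Rminus; field; lra].
    - apply (ex_derive_continuous (fun s => exp (- (c * (1 - s))))); auto_derive; auto. }
  replace (c * (1 - 1)) with 0 in H by ring; replace (c * (1 - 0)) with c in H by ring.
  rewrite Ropp_0, exp_0 in H; replace ((1 - exp (- c)) / c) with (1 / c - exp (- c) / c)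
    by (field; lra); exact H.
Qed.

(** * The phase and an exact antiderivative *)

Definition b_coef (t : C) : C := (1 + / t - 2 * (/ t * / t))%C.

Definition phase (b : C) (k : R) (t : C) : C := (b * b_coef t - k * (/ t - 1))%C.

Lemma gfrak_sub_eq_phase (a t : C) (eta lam : R) : a <> 0%C -> t <> 0%C ->
  (gfrak a 1 eta lam - gfrak a t eta lam)%C = phase (/ (2 * (a * a)))%C (2 * eta ^ 2) t.
Proof.
  intros Ha Ht; unfold gfrak, phase, b_coef.
  rewrite !RtoC_mult, RtoC_opp, RtoC_pow.
  field; auto.
Qed.

Definition Phi (b : C) (gam k : R) (t : C) : C :=
  (RtoC (2 - gam) * Clog_rhp t + phase b k t)%C.

(* The derivative of [Phi b gam k] (see [is_Cderive_Phi_path]); only its last term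
   depends on k. *)
Definition Phi_deriv (b : C) (gam k : R) (t : C) : C :=
  (RtoC (2 - gam) * / t + b * (4 * (/ t * / t * / t) - / t * / t) + k * (/ t * / t))%C.

Ltac solve_is_Cderive :=
  repeat match goal with
  | |- is_Cderive (fun _ => ?c) _ _ => apply is_Cderive_const
  | |- is_Cderive (fun s => Cplus _ (Cmult (RtoC s) _)) _ _ => apply is_Cderive_affine
  | |- is_Cderive (fun s => Cplus _ _) _ _ => apply is_Cderive_plus
  | |- is_Cderive (fun s => Cminus _ _) _ _ => apply is_Cderive_minus
  | |- is_Cderive (fun s => Copp _) _ _ => apply is_Cderive_opp
  | |- is_Cderive (fun s => Cmult _ _) _ _ => apply is_Cderive_mult
  | |- is_Cderive (fun s => cexp _) _ _ => apply is_Cderive_cexp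
  | |- is_Cderive (fun s => Cinv _) _ _ => apply is_Cderive_inv; [assumption|]
  | |- is_Cderive (fun s => Clog_rhp _) _ _ => apply is_Cderive_Clog_rhp; [assumption|]
  end.

Definition rem_density (b : C) (gam k : R) (t : C) : C :=
  (cexp (Phi b gam k t) * Phi_deriv b gam 0 t / k)%C.

Lemma cpow_mul_cexp_phase (b : C) (gam k : R) (t : C) : 0 < fst t -> k <> 0 ->
  (cpow_pr t (RtoC (- gam)) * cexp (phase b k t))%C
  = (cexp (Phi b gam k t) * Phi_deriv b gam k t / k - rem_density b gam k t)%C.
Proof.
  intros Ht Hk; assert (Ht0 := fst_pos_neq_0 t Ht).
  unfold cpow_pr, rem_density, Phi, Phi_deriv; rewrite Clog_rhp_eq by exact Ht.
  replace (RtoC (2 - gam) * Clog_rhp t + phase b k t)%C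
    with (RtoC (- gam) * Clog_rhp t + Clog_rhp t + Clog_rhp t + phase b k t)%C
    by (rewrite RtoC_minus, RtoC_opp; ring).
  rewrite !cexp_plus, cexp_Clog_rhp by exact Ht.
  field; split; [exact Ht0 | now apply RtoC_neq_0].
Qed.

Definition rem_int (b : C) (gam k : R) (p q : C) (lo : R) : C :=
  RInt (V := C_R_CompleteNormedModule) (fun s => rem_density b gam k (p + s * (q - p))%C) lo 1.

Lemma cexp_Phi_1 (b : C) (gam k : R) : cexp (Phi b gam k 1) = 1%C.
Proof.
  assert (HL : Clog_rhp 1 = 0%C).
  { unfold Clog_rhp; cbn [fst snd RtoC].
    replace (1 ^ 2 + 0 ^ 2) with 1 by ring; rewrite ln_1.
    replace (0 / 1) with 0 by field; rewrite atan_0.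
    apply injective_projections; simpl; field. }
  assert (HP : Phi b gam k 1 = 0%C) by (unfold Phi, phase, b_coef; rewrite HL; field).
  rewrite HP; unfold cexp, Re, Im; cbn [fst snd RtoC]; rewrite exp_0, cos_0, sin_0.
  apply injective_projections; simpl; ring.
Qed.

Section Segment.

Variables (b : C) (gam k : R) (p q : C).

Let path (s : R) : C := (p + s * (q - p))%C.

Lemma is_Cderive_Phi_path (x : R) : 0 < fst (path x) ->
  is_Cderive (fun s => Phi b gam k (path s)) x ((q - p) * Phi_deriv b gam k (path x))%C.
Proof.
  intro Hx; assert (Hx0 := fst_pos_neq_0 _ Hx).
  unfold Phi, phase, b_coef, Phi_deriv, path in *.
  eapply is_Cderive_ext_deriv; [| solve_is_Cderive].
  cbv beta; field; exact Hx0.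
Qed.

Lemma continuous_Phi_density (k' x : R) : 0 < fst (path x) ->
  continuous (fun s => cexp (Phi b gam k (path s)) * Phi_deriv b gam k' (path s) / k)%C x.
Proof.
  intro Hx; assert (Hx0 := fst_pos_neq_0 _ Hx).
  unfold Phi, phase, b_coef, Phi_deriv, Cdiv, path in *.
  eapply is_Cderive_continuous; solve_is_Cderive.
Qed.

Lemma is_RInt_Phi_density (lo hi : R) : lo <= hi -> p <> q -> k <> 0 ->
  (forall s, lo <= s <= hi -> 0 < fst (path s)) ->
  is_RInt (V := C_R_CompleteNormedModule)
    (fun s => cexp (Phi b gam k (path s)) * Phi_deriv b gam k (path s) / k)%C lo hi
    ((cexp (Phi b gam k (path hi)) - cexp (Phi b gam k (path lo))) / (k * (q - p)))%C.
Proof.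
  intros Hlh Hpq Hk Hpos.
  assert (Hk' := RtoC_neq_0 k Hk); assert (Hd := Cminus_neq_0 p q Hpq).
  set (c := (/ (k * (q - p)))%C).
  set (F := fun s => (cexp (Phi b gam k (path s)) * c)%C).
  assert (E : @eq C (minus (G := C_AbelianGroup) (F hi) (F lo))
                ((cexp (Phi b gam k (path hi)) - cexp (Phi b gam k (path lo))) / (k * (q - p)))%C)
    by (rewrite C_minus_eq; unfold F, c; field; auto).
  rewrite <- E; apply (is_RInt_derive (V := C_R_CompleteNormedModule) F); intros x Hx;
    rewrite Rmin_left, Rmax_right in Hx by exact Hlh; specialize (Hpos x Hx).
  - apply is_Cderive_is_derive.
    eapply is_Cderive_ext_deriv;
      [| apply is_Cderive_mult; [apply is_Cderive_cexp, is_Cderive_Phi_path, Hpos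
                                 | apply is_Cderive_const]].
    unfold c; field; auto.
  - exact (continuous_Phi_density k x Hpos).
Qed.

Lemma ex_RInt_rem_density (lo : R) : lo <= 1 -> (forall s, lo <= s <= 1 -> 0 < fst (path s)) ->
  ex_RInt (V := C_R_CompleteNormedModule) (fun s => rem_density b gam k (path s)) lo 1.
Proof.
  intros Hl Hpos; apply ex_RInt_continuous; intros x Hx.
  rewrite Rmin_left, Rmax_right in Hx by exact Hl.
  exact (continuous_Phi_density 0 x (Hpos x Hx)).
Qed.

Lemma seg_int_outside_eq (f : C -> C) (rho s0 : R) : p <> q -> k <> 0 -> 0 <= s0 <= 1 ->
  (forall s, 0 < s < s0 -> Cmod (path s) <= rho) ->
  (forall s, s0 < s < 1 -> rho < Cmod (path s)) ->
  (forall s, s0 <= s <= 1 -> 0 < fst (path s)) ->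
  (forall t, 0 < fst t -> f t = (cpow_pr t (RtoC (- gam)) * cexp (phase b k t))%C) ->
  seg_int_outside f rho p q =
    ((cexp (Phi b gam k q) - cexp (Phi b gam k (path s0))) / k
     - (q - p) * rem_int b gam k p q s0)%C.
Proof.
  intros Hpq Hk Hs0 Hin Hout Hpos Hf.
  assert (Hk' := RtoC_neq_0 k Hk); assert (Hd := Cminus_neq_0 p q Hpq).
  assert (Hrem := ex_RInt_rem_density s0 ltac:(lra) Hpos).
  assert (Hpath1 : path 1 = q) by (unfold path; ring).
  unfold seg_int_outside, rem_int; fold path.
  erewrite is_RInt_unique; cycle 1.
  { apply (is_RInt_Chasles (V := C_R_CompleteNormedModule) _ 0 s0 1).
    - apply (is_RInt_ext (V := C_R_CompleteNormedModule) (fun _ => RtoC 0)).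
      { intros x Hx; rewrite Rmin_left, Rmax_right in Hx by lra.
        destruct Rlt_dec as [H|]; [|reflexivity].
        specialize (Hin x Hx); unfold path in Hin; lra. }
      apply is_RInt_C0.
    - apply (is_RInt_ext (V := C_R_CompleteNormedModule)
               (fun s => minus (cexp (Phi b gam k (path s)) * Phi_deriv b gam k (path s) / k)
                               (rem_density b gam k (path s)))%C).
      { intros x Hx; rewrite Rmin_left, Rmax_right in Hx by lra.
        destruct Rlt_dec as [_|H]; [|now specialize (Hout x Hx)].
        rewrite Hf by (apply Hpos; lra).
        now rewrite cpow_mul_cexp_phase by (try apply Hpos; lra). }
      apply (is_RInt_minus (V := C_R_CompleteNormedModule)).
      + apply is_RInt_Phi_density; lra || assumption.
      + exact (RInt_correct _ _ _ Hrem). }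
  rewrite Hpath1; change (plus ?u ?v) with (u + v)%C; change (minus ?u ?v) with (u - v)%C.
  unfold path; field; auto.
Qed.

Lemma seg_int_outside_eq_whole (f : C -> C) (rho : R) : p <> q -> k <> 0 ->
  (forall s, 0 < s < 1 -> rho < Cmod (path s)) ->
  (forall s, 0 <= s <= 1 -> 0 < fst (path s)) ->
  (forall t, 0 < fst t -> f t = (cpow_pr t (RtoC (- gam)) * cexp (phase b k t))%C) ->
  seg_int_outside f rho p q =
    ((cexp (Phi b gam k q) - cexp (Phi b gam k p)) / k - (q - p) * rem_int b gam k p q 0)%C.
Proof.
  intros Hpq Hk Hout Hpos Hf.
  replace p with (path 0) at 2 by (unfold path; ring).
  apply seg_int_outside_eq; auto; [lra | intros s Hs; lra].
Qed.

End Segment.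

(** * Pointwise bounds for the remainder *)

Lemma b_coef_factor (t : C) : t <> 0%C -> b_coef t = ((t - 1) * (t + 2) / (t * t))%C.
Proof. intro Ht; unfold b_coef; field; exact Ht. Qed.

Lemma Cmod_b_coef_le (t : C) : t <> 0%C ->
  Cmod (b_coef t) <= 1 + / Cmod t + 2 * (/ Cmod t) ^ 2.
Proof.
  intro Ht; unfold b_coef, Cminus.
  eapply Rle_trans; [apply Cmod_triangle|].
  rewrite Cmod_opp, !Cmod_mult, Cmod_R, !Cmod_inv by exact Ht.
  eapply Rle_trans; [apply Rplus_le_compat_r, Cmod_triangle|].
  rewrite Cmod_1, Cmod_inv by exact Ht; rewrite Rabs_right by lra; right; ring.
Qed.

Lemma Cmod_Phi_deriv0_le (b : C) (gam : R) (t : C) : t <> 0%C ->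
  Cmod (Phi_deriv b gam 0 t)
  <= Rabs (2 - gam) * / Cmod t + Cmod b * (4 * (/ Cmod t) ^ 3 + (/ Cmod t) ^ 2).
Proof.
  intro Ht; unfold Phi_deriv.
  eapply Rle_trans; [apply Cmod_triangle|].
  rewrite Cmod_mult, Cmod_R, Rabs_R0, Rmult_0_l, Rplus_0_r.
  eapply Rle_trans; [apply Cmod_triangle|].
  rewrite !Cmod_mult, Cmod_R, Cmod_inv by exact Ht.
  apply Rplus_le_compat_l, Rmult_le_compat_l; [apply Cmod_ge_0|].
  unfold Cminus; eapply Rle_trans; [apply Cmod_triangle|].
  rewrite Cmod_opp, !Cmod_mult, Cmod_R, !Cmod_inv by exact Ht.
  rewrite Rabs_right by lra; right; ring.
Qed.

Lemma fst_Phi_le (b : C) (gam k : R) (t : C) : t <> 0%C ->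
  fst (Phi b gam k t)
  <= (2 - gam) * ln (Cmod t) + Cmod b * Cmod (b_coef t) - k * (fst (/ t)%C - 1).
Proof.
  intro Ht; unfold Phi, phase.
  pose proof (fst_le_Cmod (b * b_coef t)) as H; rewrite Cmod_mult in H.
  rewrite <- fst_Clog_rhp by exact Ht; cbn [fst snd Cplus Cminus Cmult Copp RtoC] in *; lra.
Qed.

(* Upper bounds for [fst (Phi b gam k t)] and [Cmod (Phi_deriv b gam 0 t)] when
   [Cmod b <= B]. *)
Definition rem_exponent (gam B k : R) (t : C) : R :=
  (2 - gam) * ln (Cmod t) + B * Cmod (b_coef t) - k * (fst (/ t)%C - 1).

Definition rem_weight (gam B : R) (t : C) : R :=
  Rabs (2 - gam) * / Cmod t + B * (4 * (/ Cmod t) ^ 3 + (/ Cmod t) ^ 2).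

Lemma rem_weight_nonneg (gam B : R) (t : C) : 0 <= B -> 0 <= rem_weight gam B t.
Proof.
  intro HB; pose proof (Cmod_ge_0 t).
  assert (HT : 0 <= / Cmod t) by (destruct (Req_dec (Cmod t) 0) as [->|];
    [rewrite Rinv_0; lra | apply Rlt_le, Rinv_0_lt_compat; lra]).
  unfold rem_weight; pose proof (Rabs_pos (2 - gam)).
  apply Rplus_le_le_0_compat; [nra|]; apply Rmult_le_pos; [lra|].
  apply Rplus_le_le_0_compat; [apply Rmult_le_pos; [lra|] |]; now apply pow_le.
Qed.

Section Envelope.

Variables (b : C) (gam B k : R) (t : C).
Hypotheses (Hb : Cmod b <= B) (Ht : t <> 0%C).

Lemma Cmod_cexp_Phi_le : Cmod (cexp (Phi b gam k t)) <= exp (rem_exponent gam B k t).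
Proof.
  rewrite Cmod_cexp; apply exp_le_exp; eapply Rle_trans; [exact (fst_Phi_le b gam k t Ht)|].
  unfold rem_exponent; pose proof (Cmod_ge_0 (b_coef t)); nra.
Qed.

Lemma Cmod_rem_density_le : 0 < k ->
  Cmod (rem_density b gam k t) <= exp (rem_exponent gam B k t) * rem_weight gam B t / k.
Proof.
  intro Hk; unfold rem_density, Cdiv.
  rewrite !Cmod_mult, Cmod_inv, Cmod_R, Rabs_right by (first [apply RtoC_neq_0; lra | lra]).
  unfold Rdiv; apply Rmult_le_compat_r; [now apply Rlt_le, Rinv_0_lt_compat|].
  apply Rmult_le_compat; [apply Cmod_ge_0 | apply Cmod_ge_0 | exact Cmod_cexp_Phi_le |].
  eapply Rle_trans; [exact (Cmod_Phi_deriv0_le b gam t Ht)|].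
  unfold rem_weight; apply Rplus_le_compat_l, Rmult_le_compat_r; [|exact Hb].
  assert (HT : 0 <= / Cmod t) by (apply Rlt_le, Rinv_0_lt_compat, Cmod_gt_0, Ht).
  apply Rplus_le_le_0_compat; [apply Rmult_le_pos; [lra|] |]; now apply pow_le.
Qed.

End Envelope.

(** * The contour Omega *)

Definition OmP1_re : R := 1 / (3 * sqrt 3).

Lemma OmP1_re_bounds : OmP1_re ^ 2 = 1 / 27 /\ 0.1924 < OmP1_re < 0.1925.
Proof.
  assert (H3 : sqrt 3 * sqrt 3 = 3) by (apply sqrt_sqrt; lra).
  assert (Hp : 0 < sqrt 3) by (apply sqrt_lt_R0; lra).
  assert (E : OmP1_re ^ 2 = 1 / 27).
  { unfold OmP1_re; replace ((1 / (3 * sqrt 3)) ^ 2) with (1 / (9 * (sqrt 3 * sqrt 3)))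
      by (field; lra).
    rewrite H3; field. }
  assert (0 < OmP1_re) by (unfold OmP1_re; apply Rdiv_lt_0_compat; lra).
  split; [exact E | split; nra].
Qed.

Lemma Omega_path1 (s : R) : (0 + s * (OmP1 - 0))%C = (s * OmP1_re, - (s / 3)).
Proof.
  assert (H3 : sqrt 3 <> 0) by (apply Rgt_not_eq, sqrt_lt_R0; lra).
  apply injective_projections; simpl; unfold OmP1_re; field; exact H3.
Qed.

Lemma Omega_path2 (s : R) :
  (OmP1 + s * (OmP2 - OmP1))%C = (OmP1_re + s * (1 - 2 * OmP1_re), - (1 / 3)).
Proof.
  assert (H3 : sqrt 3 <> 0) by (apply Rgt_not_eq, sqrt_lt_R0; lra).
  apply injective_projections; simpl; unfold OmP1_re; field; exact H3.
Qed.

Lemma Omega_path3 (s : R) :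
  (OmP2 + s * (1 - OmP2))%C = (1 - (1 - s) * OmP1_re, - ((1 - s) / 3)).
Proof.
  assert (H3 : sqrt 3 <> 0) by (apply Rgt_not_eq, sqrt_lt_R0; lra).
  apply injective_projections; simpl; unfold OmP1_re; field; exact H3.
Qed.

Lemma Cmod_Omega_path1 (s : R) : 0 <= s -> Cmod (s * OmP1_re, - (s / 3)) = 2 * OmP1_re * s.
Proof.
  intro Hs; destruct OmP1_re_bounds as [Hr2 Hr]; rewrite Cmod_pair.
  replace ((s * OmP1_re) ^ 2 + (- (s / 3)) ^ 2) with ((2 * OmP1_re * s) ^ 2)
    by (replace ((- (s / 3)) ^ 2) with (s ^ 2 * (3 * (1 / 27))) by field; rewrite <- Hr2; ring).
  apply sqrt_pow2; nra.
Qed.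

Lemma Cmod_b_coef_Omega_path3 (u : R) : 0 <= u <= 1 ->
  Cmod (b_coef (1 - u * OmP1_re, - (u / 3)))
  <= 6 * OmP1_re * u * (/ Cmod (1 - u * OmP1_re, - (u / 3))) ^ 2.
Proof.
  intro Hu; destruct OmP1_re_bounds as [Hr2 Hr].
  set (t := (1 - u * OmP1_re, - (u / 3))).
  assert (Ht : t <> RtoC 0) by (apply fst_pos_neq_0; simpl; nra).
  assert (Hmt : 0 < Cmod t) by now apply Cmod_gt_0.
  assert (E1 : Cmod (t - 1)%C = 2 * OmP1_re * u).
  { replace (t - 1)%C with ((- (u * OmP1_re), - (u / 3)) : C)
      by (apply injective_projections; simpl; ring).
    rewrite Cmod_pair; replace ((- (u / 3)) ^ 2) with (u ^ 2 * (3 * (1 / 27))) by field.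
    rewrite <- Hr2; replace ((- (u * OmP1_re)) ^ 2 + u ^ 2 * (3 * OmP1_re ^ 2))
      with ((2 * OmP1_re * u) ^ 2) by ring.
    apply sqrt_pow2; nra. }
  assert (E2 : Cmod (t + 2)%C <= 3).
  { replace (t + 2)%C with ((3 - u * OmP1_re, - (u / 3)) : C)
      by (apply injective_projections; simpl; ring).
    rewrite Cmod_pair; apply Rle_trans with (sqrt (3 ^ 2)); [| rewrite sqrt_pow2; lra].
    apply sqrt_le_1_alt.
    replace ((- (u / 3)) ^ 2) with (u ^ 2 * (3 * (1 / 27))) by field; rewrite <- Hr2.
    assert (0 <= u * OmP1_re <= 1) by nra. nra. }
  rewrite b_coef_factor, Cmod_div, !Cmod_mult, E1 by (try apply Cmult_neq_0; exact Ht).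
  replace (6 * OmP1_re * u * (/ Cmod t) ^ 2) with (2 * OmP1_re * u * 3 / (Cmod t * Cmod t))
    by (field; lra).
  unfold Rdiv; apply Rmult_le_compat_r; [apply Rlt_le, Rinv_0_lt_compat; nra|].
  apply Rmult_le_compat_l; nra.
Qed.

Lemma Cmod_Omega_edges_le :
  Cmod (OmP1 - 0) <= 1 /\ Cmod (OmP2 - OmP1) <= 1 /\ Cmod (1 - OmP2) <= 1.
Proof.
  destruct OmP1_re_bounds as [Hr2 Hr].
  assert (Hle : forall x y, x ^ 2 + y ^ 2 <= 1 -> Cmod (x, y) <= 1)
    by (intros x y H; rewrite Cmod_pair, <- sqrt_1; now apply sqrt_le_1_alt).
  replace (OmP1 - 0)%C with ((OmP1_re, - (1 / 3)) : C)
    by (apply injective_projections; simpl; unfold OmP1_re; ring).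
  replace (OmP2 - OmP1)%C with ((1 - 2 * OmP1_re, 0) : C)
    by (apply injective_projections; simpl; unfold OmP1_re; ring).
  replace (1 - OmP2)%C with ((OmP1_re, 1 / 3) : C)
    by (apply injective_projections; simpl; unfold OmP1_re; ring).
  repeat split; apply Hle; nra.
Qed.

Lemma third_lt_Cmod (x : R) : 0 < x -> 1 / 3 < Cmod (x, - (1 / 3)).
Proof.
  intro Hx; rewrite Cmod_pair, <- (sqrt_pow2 (1 / 3)) at 1 by lra.
  apply sqrt_lt_1_alt; split; [apply pow2_ge_0 | nra].
Qed.

Lemma Omega_path2_facts (x : R) : OmP1_re <= x <= 1 - OmP1_re ->
  1 / 3 <= Cmod (x, - (1 / 3)) <= 1 /\ 0.044 <= fst (Cinv (x, - (1 / 3))) - 1.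
Proof.
  intro Hx; destruct OmP1_re_bounds as [Hr2 Hr]; split.
  - apply Cmod_pair_bounds; nra.
  - eapply Rle_trans; [|apply fst_Cinv_pair_sub_1_ge]; nra.
Qed.

Lemma Omega_path3_facts (u : R) : 0 <= u <= 1 ->
  3 / 4 <= Cmod (1 - u * OmP1_re, - (u / 3)) <= 1
  /\ 0.044 * u <= fst (Cinv (1 - u * OmP1_re, - (u / 3))) - 1.
Proof.
  intro Hu; destruct OmP1_re_bounds as [Hr2 Hr].
  assert (HN : (1 - u * OmP1_re) ^ 2 + (- (u / 3)) ^ 2 = 1 - 2 * u * OmP1_re + 4 / 27 * u ^ 2)
    by (replace (4 / 27) with (1 / 27 + 1 / 9) by field; rewrite <- Hr2; field).
  split.
  - apply Cmod_pair_bounds; [lra|]; rewrite HN; nra.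
  - eapply Rle_trans; [|apply fst_Cinv_pair_sub_1_ge]; rewrite ?HN; nra.
Qed.

(** * Estimates along the three edges *)

Section Estimates.

Variables (gam e : R).
Hypotheses (He : 1000 <= e) (Hgam : Rabs (2 - gam) <= e).

Lemma exp_neg_e2_le (c y : R) : 0 < c -> 0 < y ->
  exp (- (c * e ^ 2 * y)) <= 27 / (c ^ 3 * e ^ 6 * y ^ 3).
Proof.
  intros Hc Hy.
  assert (He2 : 0 < e ^ 2) by (apply pow_lt; lra).
  eapply Rle_trans; [apply exp_neg_le; apply Rmult_lt_0_compat; [apply Rmult_lt_0_compat|]; lra|].
  right; field; repeat split; lra.
Qed.

Lemma seg1_exponent_le (T W : R) : 5 / 2 <= T <= e / 25 -> 0 <= W <= 1 + T + 2 * T ^ 2 ->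
  (2 - gam) * (- ln T) + e / 2 * W - 2 * e ^ 2 * (T / 2 - 1) <= - (1 / 10 * e ^ 2 * T).
Proof.
  intros HT HW.
  assert (HlnT : 0 <= ln T <= T).
  { pose proof (ln_le_sub_1 T ltac:(lra)).
    split; [|lra]. rewrite <- ln_1; apply Rlt_le, ln_increasing; lra. }
  assert (H1 : (2 - gam) * (- ln T) <= e * T).
  { eapply Rle_trans; [apply mul_le_abs_mul|].
    rewrite Rabs_Ropp, (Rabs_right (ln T)) by lra; apply Rmult_le_compat; lra || apply Rabs_pos. }
  assert (H2 : e / 2 * W <= 2 / 25 * e ^ 2 * T).
  { assert (W <= 4 * T ^ 2) by nra.
    assert (e / 2 * W <= e / 2 * (4 * T ^ 2)) by (apply Rmult_le_compat_l; lra).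
    assert (2 * e * T * T <= 2 * e * T * (e / 25)) by (apply Rmult_le_compat_l; nra).
    nra. }
  assert (e * T <= e ^ 2 / 50 * T) by (apply Rmult_le_compat_r; nra).
  nra.
Qed.

Lemma seg1_exp_rem_exponent_le (s : R) : 0 < s <= 1 -> / (2 * OmP1_re * s) <= e / 25 ->
  exp (rem_exponent gam (e / 2) (2 * e ^ 2) (s * OmP1_re, - (s / 3)))
  <= 27000 / (e ^ 6 * (/ (2 * OmP1_re * s)) ^ 3).
Proof.
  intros Hs HTe; destruct OmP1_re_bounds as [Hr2 Hr].
  set (t := (s * OmP1_re, - (s / 3))); set (T := / (2 * OmP1_re * s)) in *.
  assert (Hmod : Cmod t = 2 * OmP1_re * s) by (apply Cmod_Omega_path1; lra).
  assert (Ht : t <> RtoC 0) by (apply fst_pos_neq_0; simpl; nra).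
  assert (HT : 5 / 2 <= T).
  { unfold T; rewrite <- (Rinv_inv (5 / 2)); apply Rinv_le_contravar; [nra|].
    assert (2 * OmP1_re * s <= 2 * OmP1_re) by nra; lra. }
  assert (HW := Cmod_b_coef_le t Ht); rewrite Hmod in HW; fold T in HW.
  assert (Hfst : fst (/ t)%C = T / 2).
  { unfold t; rewrite fst_Cinv_pair; unfold T.
    replace ((- (s / 3)) ^ 2) with (s ^ 2 * (3 * (1 / 27))) by field; rewrite <- Hr2.
    field; split; nra. }
  apply Rle_trans with (exp (- (1 / 10 * e ^ 2 * T))).
  - apply exp_le_exp; unfold rem_exponent; rewrite Hmod, Hfst.
    replace (ln (2 * OmP1_re * s)) with (- ln T) by (unfold T; rewrite ln_Rinv by nra; ring).
    apply seg1_exponent_le; [lra | split; [apply Cmod_ge_0 | exact HW]].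
  - eapply Rle_trans; [apply exp_neg_e2_le; lra|].
    right; field; split; lra.
Qed.

Lemma le_inv_pow3_of_le_div_pow7 (c x : R) : 0 <= c <= 10 ^ 12 -> x <= c / e ^ 7 -> x <= 1 / e ^ 3.
Proof.
  intros Hc Hx; eapply Rle_trans; [exact Hx|].
  assert (He3 : 0 < e ^ 3) by (apply pow_lt; lra).
  assert (He4 : 10 ^ 12 <= e ^ 4)
    by (replace (10 ^ 12) with ((10 ^ 3) ^ 4) by ring; apply pow_incr; lra).
  replace (c / e ^ 7) with (c / e ^ 4 * (1 / e ^ 3)) by (field; lra).
  rewrite <- (Rmult_1_l (1 / e ^ 3)) at 2.
  apply Rmult_le_compat_r; [apply Rlt_le, Rdiv_lt_0_compat; lra|].
  apply Rmult_le_reg_r with (e ^ 4); [lra|]; unfold Rdiv; rewrite Rmult_assoc, Rinv_l; lra.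
Qed.

Lemma seg1_rem_le (s : R) : 0 < s <= 1 -> / (2 * OmP1_re * s) <= e / 25 ->
  exp (rem_exponent gam (e / 2) (2 * e ^ 2) (s * OmP1_re, - (s / 3)))
  * rem_weight gam (e / 2) (s * OmP1_re, - (s / 3)) / (2 * e ^ 2) <= 1 / e ^ 3.
Proof.
  intros Hs HTe; destruct OmP1_re_bounds as [Hr2 Hr].
  assert (HE := seg1_exp_rem_exponent_le s Hs HTe).
  set (T := / (2 * OmP1_re * s)) in *.
  assert (HT : 1 <= T).
  { unfold T; rewrite <- Rinv_1; apply Rinv_le_contravar; nra. }
  assert (HW : rem_weight gam (e / 2) (s * OmP1_re, - (s / 3)) <= 4 * e * T ^ 3).
  { unfold rem_weight; rewrite Cmod_Omega_path1 by lra; fold T.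
    assert (T <= T ^ 3) by nra. assert (T ^ 2 <= T ^ 3) by nra.
    pose proof (Rabs_pos (2 - gam)). nra. }
  apply (le_inv_pow3_of_le_div_pow7 54000); [lra|].
  assert (HT3 : 0 < T ^ 3) by (apply pow_lt; lra).
  apply Rle_trans with (27000 / (e ^ 6 * T ^ 3) * (4 * e * T ^ 3) / (2 * e ^ 2)).
  - unfold Rdiv; apply Rmult_le_compat_r; [apply Rlt_le, Rinv_0_lt_compat; nra|].
    apply Rmult_le_compat;
      [apply Rlt_le, exp_pos | apply rem_weight_nonneg; lra | exact HE | exact HW].
  - right; field; lra.
Qed.

Lemma seg1_boundary_le (s : R) : 0 < s <= 1 -> / (2 * OmP1_re * s) <= e / 25 ->
  exp (rem_exponent gam (e / 2) (2 * e ^ 2) (s * OmP1_re, - (s / 3))) / (2 * e ^ 2)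
  <= 1 / e ^ 3.
Proof.
  intros Hs HTe; destruct OmP1_re_bounds as [Hr2 Hr].
  assert (HE := seg1_exp_rem_exponent_le s Hs HTe).
  set (T := / (2 * OmP1_re * s)) in *.
  assert (HT : 1 <= T).
  { unfold T; rewrite <- Rinv_1; apply Rinv_le_contravar; nra. }
  apply (le_inv_pow3_of_le_div_pow7 13500); [lra|].
  assert (HT3 : 1 <= T ^ 3) by (rewrite <- (pow1 3); apply pow_incr; lra).
  apply Rle_trans with (27000 / (e ^ 6 * T ^ 3) / (2 * e ^ 2)).
  - unfold Rdiv; apply Rmult_le_compat_r; [apply Rlt_le, Rinv_0_lt_compat; nra | exact HE].
  - replace (27000 / (e ^ 6 * T ^ 3) / (2 * e ^ 2)) with (13500 / (e ^ 7 * (e * T ^ 3)))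
      by (field; lra).
    assert (He7 : 0 < e ^ 7) by (apply pow_lt; lra).
    unfold Rdiv; apply Rmult_le_compat_l; [lra|]; apply Rinv_le_contravar; [lra|].
    rewrite <- (Rmult_1_r (e ^ 7)) at 1; apply Rmult_le_compat_l; nra.
Qed.

Lemma seg2_exponent_le (x : R) : OmP1_re <= x <= 1 - OmP1_re ->
  rem_exponent gam (e / 2) (2 * e ^ 2) (x, - (1 / 3)) <= - (1 / 25 * e ^ 2 * 1)
  /\ rem_weight gam (e / 2) (x, - (1 / 3)) <= 62 * e.
Proof.
  intro Hx; destruct (Omega_path2_facts x Hx) as [Hm Hfst].
  set (t := (x, - (1 / 3))) in *; set (T := / Cmod t).
  assert (Ht : t <> RtoC 0) by (intro E; rewrite E, Cmod_0 in Hm; lra).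
  assert (HT : 1 <= T <= 3).
  { unfold T; split; [rewrite <- Rinv_1 | replace 3 with (/ (1 / 3)) by field];
      apply Rinv_le_contravar; lra. }
  assert (Hln := Rabs_ln_le (Cmod t) (1 / 3) ltac:(lra) ltac:(lra)).
  replace (/ (1 / 3) - 1) with 2 in Hln by field.
  assert (HW := Cmod_b_coef_le t Ht); fold T in HW.
  pose proof (Rabs_pos (2 - gam)); pose proof (Cmod_ge_0 (b_coef t)).
  unfold rem_exponent, rem_weight; fold T; split.
  - assert ((2 - gam) * ln (Cmod t) <= e * 2).
    { eapply Rle_trans; [apply mul_le_abs_mul|]; apply Rmult_le_compat; try apply Rabs_pos; lra. }
    assert (e / 2 * Cmod (b_coef t) <= e / 2 * 22) by (apply Rmult_le_compat_l; nra).
    assert (2 * e ^ 2 * 0.044 <= 2 * e ^ 2 * (fst (/ t)%C - 1))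
      by (apply Rmult_le_compat_l; nra).
    nra.
  - assert (Rabs (2 - gam) * T <= e * 3) by (apply Rmult_le_compat; lra).
    assert (4 * T ^ 3 + T ^ 2 <= 117) by nra.
    nra.
Qed.

Lemma seg2_rem_le (x : R) : OmP1_re <= x <= 1 - OmP1_re ->
  exp (rem_exponent gam (e / 2) (2 * e ^ 2) (x, - (1 / 3)))
  * rem_weight gam (e / 2) (x, - (1 / 3)) / (2 * e ^ 2) <= 1 / e ^ 3.
Proof.
  intro Hx; destruct (seg2_exponent_le x Hx) as [HE HW].
  assert (HE' := Rle_trans _ _ _ (exp_le_exp _ _ HE)
                   (exp_neg_e2_le (1 / 25) 1 ltac:(lra) ltac:(lra))).
  apply (le_inv_pow3_of_le_div_pow7 13078125); [lra|].
  apply Rle_trans with (27 / ((1 / 25) ^ 3 * e ^ 6 * 1 ^ 3) * (62 * e) / (2 * e ^ 2)).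
  - unfold Rdiv; apply Rmult_le_compat_r; [apply Rlt_le, Rinv_0_lt_compat; nra|].
    apply Rmult_le_compat;
      [apply Rlt_le, exp_pos | apply rem_weight_nonneg; lra | exact HE' | exact HW].
  - right; field; lra.
Qed.

Lemma seg3_exponent_le (u : R) : 0 <= u <= 1 ->
  rem_exponent gam (e / 2) (2 * e ^ 2) (1 - u * OmP1_re, - (u / 3))
    <= Rabs (2 - gam) - 1 / 25 * e ^ 2 * u
  /\ rem_weight gam (e / 2) (1 - u * OmP1_re, - (u / 3)) <= 8 * e.
Proof.
  intro Hu; destruct OmP1_re_bounds as [Hr2 Hr].
  destruct (Omega_path3_facts u Hu) as [Hm Hfst].
  assert (HW := Cmod_b_coef_Omega_path3 u Hu).
  set (t := (1 - u * OmP1_re, - (u / 3))) in *; set (T := / Cmod t) in *.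
  assert (HT : 1 <= T <= 4 / 3).
  { unfold T; split; [rewrite <- Rinv_1 | replace (4 / 3) with (/ (3 / 4)) by field];
      apply Rinv_le_contravar; lra. }
  assert (Hln := Rabs_ln_le (Cmod t) (3 / 4) ltac:(lra) ltac:(lra)).
  replace (/ (3 / 4) - 1) with (1 / 3) in Hln by field.
  pose proof (Rabs_pos (2 - gam)); pose proof (Cmod_ge_0 (b_coef t)).
  unfold rem_exponent, rem_weight; fold T; split.
  - assert ((2 - gam) * ln (Cmod t) <= Rabs (2 - gam) * 1).
    { eapply Rle_trans; [apply mul_le_abs_mul|]; apply Rmult_le_compat_l; lra. }
    assert (HWu : Cmod (b_coef t) <= 3 * u).
    { assert (u * T ^ 2 <= u * (16 / 9)) by (apply Rmult_le_compat_l; nra). nra. }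
    assert (e / 2 * Cmod (b_coef t) <= e / 2 * (3 * u)) by (apply Rmult_le_compat_l; lra).
    assert (2 * e ^ 2 * (0.044 * u) <= 2 * e ^ 2 * (fst (/ t)%C - 1))
      by (apply Rmult_le_compat_l; nra).
    assert (e * u * 1 <= e * u * (0.032 * e)) by (apply Rmult_le_compat_l; nra).
    nra.
  - assert (Rabs (2 - gam) * T <= e * 2) by (apply Rmult_le_compat; lra).
    assert (4 * T ^ 3 + T ^ 2 <= 12) by nra.
    nra.
Qed.

End Estimates.

Section OmegaIntegral.

Variables (b : C) (gam k rho : R) (f : C -> C).
Hypotheses (Hk : k <> 0) (Hrho : 0 < rho <= 1 / 3)
  (Hf : forall t, 0 < fst t -> f t = (cpow_pr t (RtoC (- gam)) * cexp (phase b k t))%C).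

(* The first edge leaves the disc of radius rho at parameter s0. *)
Let s0 := rho / (2 * OmP1_re).

Lemma Omega_seg1_eq :
  seg_int_outside f rho 0 OmP1 =
    ((cexp (Phi b gam k OmP1) - cexp (Phi b gam k (0 + s0 * (OmP1 - 0)))) / k
     - (OmP1 - 0) * rem_int b gam k 0 OmP1 s0)%C.
Proof.
  destruct OmP1_re_bounds as [Hr2 Hr].
  assert (Hs0 : 2 * OmP1_re * s0 = rho) by (unfold s0; field; lra).
  assert (Hs0p : 0 < s0) by (unfold s0; apply Rdiv_lt_0_compat; lra).
  clearbody s0.
  apply seg_int_outside_eq; [| exact Hk | | | | | exact Hf].
  - intro E; apply (f_equal snd) in E; simpl in E; lra.
  - split; [lra|]. apply Rmult_le_reg_l with (2 * OmP1_re); [lra|]. rewrite Hs0; lra.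
  - intros s Hs; rewrite Omega_path1, Cmod_Omega_path1, <- Hs0 by lra.
    apply Rmult_le_compat_l; lra.
  - intros s Hs; rewrite Omega_path1, Cmod_Omega_path1, <- Hs0 by lra.
    apply Rmult_lt_compat_l; lra.
  - intros s Hs; rewrite Omega_path1; simpl; apply Rmult_lt_0_compat; lra.
Qed.

Lemma Omega_seg2_eq :
  seg_int_outside f rho OmP1 OmP2 =
    ((cexp (Phi b gam k OmP2) - cexp (Phi b gam k OmP1)) / k
     - (OmP2 - OmP1) * rem_int b gam k OmP1 OmP2 0)%C.
Proof.
  destruct OmP1_re_bounds as [Hr2 Hr].
  apply seg_int_outside_eq_whole; [| exact Hk | | | exact Hf].
  - intro E; apply (f_equal fst) in E; simpl in E; unfold OmP1_re in Hr; lra.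
  - intros s Hs; rewrite Omega_path2; apply Rle_lt_trans with (1 / 3); [lra|].
    apply third_lt_Cmod; nra.
  - intros s Hs; rewrite Omega_path2; simpl; nra.
Qed.

Lemma Omega_seg3_eq :
  seg_int_outside f rho OmP2 1 =
    ((1 - cexp (Phi b gam k OmP2)) / k - (1 - OmP2) * rem_int b gam k OmP2 1 0)%C.
Proof.
  destruct OmP1_re_bounds as [Hr2 Hr].
  rewrite (seg_int_outside_eq_whole b gam k), cexp_Phi_1; [reflexivity | | exact Hk | | | exact Hf].
  - intro E; apply (f_equal fst) in E; simpl in E; unfold OmP1_re in Hr; lra.
  - intros s Hs; rewrite Omega_path3; eapply Rlt_le_trans; [|apply fst_le_Cmod]; simpl; nra.
  - intros s Hs; rewrite Omega_path3; simpl; nra.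
Qed.

Lemma Omega_int_outside_eq :
  Omega_int_outside f rho =
    ((1 - cexp (Phi b gam k (0 + s0 * (OmP1 - 0)))) / k
     - ((OmP1 - 0) * rem_int b gam k 0 OmP1 s0 + (OmP2 - OmP1) * rem_int b gam k OmP1 OmP2 0
        + (1 - OmP2) * rem_int b gam k OmP2 1 0))%C.
Proof.
  assert (Hk' := RtoC_neq_0 k Hk).
  unfold Omega_int_outside; rewrite Omega_seg1_eq, Omega_seg2_eq, Omega_seg3_eq.
  field; exact Hk'.
Qed.

End OmegaIntegral.

Lemma Cmod_Omega_combination_le (E0 J1 J2 J3 : C) (k m0 m1 m2 m3 : R) : 0 < k ->
  Cmod E0 / k <= m0 -> Cmod J1 <= m1 -> Cmod J2 <= m2 -> Cmod J3 <= m3 ->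
  Cmod ((1 - E0) / RtoC k - ((OmP1 - 0) * J1 + (OmP2 - OmP1) * J2 + (1 - OmP2) * J3)
        - / RtoC k)%C <= m0 + m1 + m2 + m3.
Proof.
  intros Hk H0 H1 H2 H3; destruct Cmod_Omega_edges_le as [Hd1 [Hd2 Hd3]].
  assert (Hk' := RtoC_neq_0 k ltac:(lra)).
  assert (HM : forall (d J : C) (m : R), Cmod d <= 1 -> Cmod J <= m -> Cmod (d * J)%C <= m).
  { intros d J m Hd HJ; rewrite Cmod_mult.
    pose proof (Cmod_ge_0 d); pose proof (Cmod_ge_0 J); nra. }
  replace ((1 - E0) / RtoC k - ((OmP1 - 0) * J1 + (OmP2 - OmP1) * J2 + (1 - OmP2) * J3)
           - / RtoC k)%C
    with (- (E0 / RtoC k) - ((OmP1 - 0) * J1 + (OmP2 - OmP1) * J2 + (1 - OmP2) * J3))%C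
    by (field; exact Hk').
  eapply Rle_trans; [apply Cmod_Cminus_le|].
  rewrite Cmod_opp, Cmod_div, Cmod_R, Rabs_right by (exact Hk' || lra).
  pose proof (Cmod_triangle ((OmP1 - 0) * J1 + (OmP2 - OmP1) * J2) ((1 - OmP2) * J3)).
  pose proof (Cmod_triangle ((OmP1 - 0) * J1) ((OmP2 - OmP1) * J2)).
  pose proof (HM _ _ _ Hd1 H1); pose proof (HM _ _ _ Hd2 H2); pose proof (HM _ _ _ Hd3 H3).
  lra.
Qed.

Section RemainderBounds.

Variables (b : C) (gam e : R).
Hypotheses (He : 1000 <= e) (Hgam : Rabs (2 - gam) <= e) (Hb : Cmod b <= e / 2).

Lemma Cmod_rem_density_le_of_envelope (t : C) (M : R) : 0 < fst t ->
  exp (rem_exponent gam (e / 2) (2 * e ^ 2) t) * rem_weight gam (e / 2) t / (2 * e ^ 2) <= M ->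
  Cmod (rem_density b gam (2 * e ^ 2) t) <= M.
Proof.
  intros Ht HM; eapply Rle_trans; [|exact HM].
  apply Cmod_rem_density_le; [exact Hb | now apply fst_pos_neq_0 | nra].
Qed.

Lemma Cmod_rem_int1_le (s0 : R) : 0 < s0 <= 1 -> / (2 * OmP1_re * s0) <= e / 25 ->
  Cmod (rem_int b gam (2 * e ^ 2) 0 OmP1 s0) <= 1 / e ^ 3.
Proof.
  intros Hs0 HT; destruct OmP1_re_bounds as [Hr2 Hr].
  assert (He3 : 0 < 1 / e ^ 3) by (apply Rdiv_lt_0_compat; [lra | apply pow_lt; lra]).
  apply Rle_trans with ((1 - s0) * (1 / e ^ 3)); [apply RInt_Cmod_le_const; [lra | |] |].
  - apply ex_RInt_rem_density; [lra|]; intros s Hs; rewrite Omega_path1; simpl; nra.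
  - intros s Hs; rewrite Omega_path1.
    apply Cmod_rem_density_le_of_envelope; [simpl; nra|].
    apply seg1_rem_le; [exact He | exact Hgam | lra |].
    eapply Rle_trans; [|exact HT]; apply Rinv_le_contravar; nra.
  - nra.
Qed.

Lemma Cmod_rem_int2_le : Cmod (rem_int b gam (2 * e ^ 2) OmP1 OmP2 0) <= 1 / e ^ 3.
Proof.
  destruct OmP1_re_bounds as [Hr2 Hr].
  apply Rle_trans with ((1 - 0) * (1 / e ^ 3)); [apply RInt_Cmod_le_const; [lra | |] | lra].
  - apply ex_RInt_rem_density; [lra|]; intros s Hs; rewrite Omega_path2; simpl; nra.
  - intros s Hs; rewrite Omega_path2.
    apply Cmod_rem_density_le_of_envelope; [simpl; nra|].
    apply seg2_rem_le; [exact He | exact Hgam | nra].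
Qed.

Lemma Cmod_rem_int3_le :
  Cmod (rem_int b gam (2 * e ^ 2) OmP2 1 0) <= 100 * exp (Rabs (2 - gam)) / e ^ 3.
Proof.
  destruct OmP1_re_bounds as [Hr2 Hr].
  set (gm := Rabs (2 - gam)) in *; set (c := 1 / 25 * e ^ 2).
  assert (Hc : 0 < c) by (unfold c; nra).
  set (M := 4 * exp gm / e).
  apply Rle_trans with (M * ((1 - exp (- c)) / c)).
  - apply (RInt_Cmod_le _ (fun s => M * exp (- (c * (1 - s)))) 0 1); [lra | | |].
    + apply ex_RInt_rem_density; [lra|]; intros s Hs; rewrite Omega_path3; simpl; nra.
    + intros s Hs; rewrite Omega_path3.
      apply Cmod_rem_density_le_of_envelope; [simpl; nra|].
      destruct (seg3_exponent_le gam e He Hgam (1 - s) ltac:(lra)) as [HE HW].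
      apply Rle_trans with (exp (gm - c * (1 - s)) * (8 * e) / (2 * e ^ 2)).
      * unfold Rdiv; apply Rmult_le_compat_r; [apply Rlt_le, Rinv_0_lt_compat; nra|].
        apply Rmult_le_compat; [apply Rlt_le, exp_pos | apply rem_weight_nonneg; lra | |exact HW].
        apply exp_le_exp; unfold c, gm; lra.
      * right; unfold M, Rminus; rewrite exp_plus; field; lra.
    + exact (is_RInt_scal _ _ _ M _ (is_RInt_exp_decay c Hc)).
  - assert (0 < exp (- c)) by apply exp_pos.
    assert (0 <= M).
    { unfold M; pose proof (exp_pos gm).
      apply Rmult_le_pos; [lra | apply Rlt_le, Rinv_0_lt_compat; lra]. }
    apply Rle_trans with (M / c).
    + unfold Rdiv; apply Rmult_le_compat_l; [lra|].
      rewrite <- (Rmult_1_l (/ c)) at 2.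
      apply Rmult_le_compat_r; [apply Rlt_le, Rinv_0_lt_compat|]; lra.
    + right; unfold M, c; field; lra.
Qed.

Lemma Cmod_cexp_Phi_seg1_le (s0 : R) : 0 < s0 <= 1 -> / (2 * OmP1_re * s0) <= e / 25 ->
  Cmod (cexp (Phi b gam (2 * e ^ 2) (0 + s0 * (OmP1 - 0)))) / (2 * e ^ 2) <= 1 / e ^ 3.
Proof.
  intros Hs0 HT; destruct OmP1_re_bounds as [Hr2 Hr].
  rewrite Omega_path1; eapply Rle_trans; [|exact (seg1_boundary_le gam e He Hgam s0 Hs0 HT)].
  unfold Rdiv; apply Rmult_le_compat_r; [apply Rlt_le, Rinv_0_lt_compat; nra|].
  apply Cmod_cexp_Phi_le; [exact Hb | apply fst_pos_neq_0; simpl; nra].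
Qed.

Lemma Omega_int_outside_sub_le (rho : R) (f : C -> C) : 0 < rho <= 1 / 3 -> / rho <= e / 25 ->
  (forall t, 0 < fst t -> f t = (cpow_pr t (RtoC (- gam)) * cexp (phase b (2 * e ^ 2) t))%C) ->
  Cmod (Omega_int_outside f rho - / RtoC (2 * e ^ 2))
  <= (3 + 100 * exp (Rabs (2 - gam))) / e ^ 3.
Proof.
  intros Hrho HT Hf; destruct OmP1_re_bounds as [Hr2 Hr].
  rewrite (Omega_int_outside_eq b gam (2 * e ^ 2) rho f ltac:(nra) Hrho Hf).
  set (s0 := rho / (2 * OmP1_re)).
  assert (Hs0 : 2 * OmP1_re * s0 = rho) by (unfold s0; field; lra).
  assert (Hs0b : 0 < s0 <= 1).
  { split; [unfold s0; apply Rdiv_lt_0_compat; lra|].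
    apply Rmult_le_reg_l with (2 * OmP1_re); [lra|]; rewrite Hs0; lra. }
  rewrite <- Hs0 in HT.
  replace ((3 + 100 * exp (Rabs (2 - gam))) / e ^ 3)
    with (1 / e ^ 3 + 1 / e ^ 3 + 1 / e ^ 3 + 100 * exp (Rabs (2 - gam)) / e ^ 3)
    by (field; lra).
  apply Cmod_Omega_combination_le; [nra | apply Cmod_cexp_Phi_seg1_le | apply Cmod_rem_int1_le
                                    | apply Cmod_rem_int2_le | apply Cmod_rem_int3_le]; assumption.
Qed.

End RemainderBounds.

Lemma Cmod_inv_2sq_le (a : C) (e : R) : 0 < e -> / sqrt e < Cmod a ->
  Cmod (/ (2 * (a * a)))%C <= e / 2.
Proof.
  intros He Ha.
  assert (Hs : 0 < sqrt e) by now apply sqrt_lt_R0.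
  assert (Hi : 0 < / sqrt e) by now apply Rinv_0_lt_compat.
  assert (Ha0 : a <> 0%C) by (apply Cmod_gt_0; lra).
  assert (H2 : / e < Cmod a ^ 2).
  { rewrite <- (sqrt_sqrt e), Rinv_mult by lra; simpl; rewrite Rmult_1_r.
    apply Rmult_le_0_lt_compat; lra. }
  rewrite Cmod_inv by (repeat apply Cmult_neq_0; auto; intro E; apply (f_equal fst) in E;
                       simpl in E; lra).
  rewrite !Cmod_mult, Cmod_R, Rabs_right by lra.
  replace (e / 2) with (/ (2 * / e)) by (field; lra).
  apply Rinv_le_contravar; [apply Rmult_lt_0_compat; [lra | now apply Rinv_0_lt_compat] | nra].
Qed.

Lemma radius_bounds (Cst e : R) : 1 <= Cst -> (25 / Cst) ^ 2 + (3 * Cst) ^ 2 <= e ->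
  0 < Cst * / sqrt e <= 1 / 3 /\ / (Cst * / sqrt e) <= e / 25.
Proof.
  intros HC He.
  assert (H9 : 9 <= (3 * Cst) ^ 2) by (replace ((3 * Cst) ^ 2) with (9 * (Cst * Cst)) by ring; nra).
  assert (He0 : 0 < e) by (pose proof (pow2_ge_0 (25 / Cst)); lra).
  assert (Hs : 0 < sqrt e) by now apply sqrt_lt_R0.
  assert (Hss : sqrt e * sqrt e = e) by (apply sqrt_sqrt; lra).
  assert (H1 : 25 / Cst <= sqrt e).
  { rewrite <- (sqrt_pow2 (25 / Cst)) by (apply Rlt_le, Rdiv_lt_0_compat; lra).
    apply sqrt_le_1_alt; pose proof (pow2_ge_0 (3 * Cst)); lra. }
  assert (H2 : 3 * Cst <= sqrt e).
  { rewrite <- (sqrt_pow2 (3 * Cst)) by lra.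
    apply sqrt_le_1_alt; pose proof (pow2_ge_0 (25 / Cst)); lra. }
  split; [split|].
  - apply Rmult_lt_0_compat; [lra | now apply Rinv_0_lt_compat].
  - apply Rmult_le_reg_r with (sqrt e); [exact Hs|].
    rewrite Rmult_assoc, Rinv_l by lra; lra.
  - rewrite Rinv_mult, Rinv_inv.
    assert (25 <= Cst * sqrt e)
      by (replace 25 with (Cst * (25 / Cst)) by (field; lra); apply Rmult_le_compat_l; lra).
    apply Rmult_le_reg_r with (25 * Cst); [lra|].
    replace (/ Cst * sqrt e * (25 * Cst)) with (25 * sqrt e) by (field; lra).
    replace (e / 25 * (25 * Cst)) with (Cst * e) by field.
    rewrite <- Hss at 2; nra.
Qed.

Theorem lemma3p6 :
  exists C1 : R, forall Cst : R, C1 <= Cst ->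
  forall (C0 : R), 0 < C0 -> forall gamma : R,
  exists (K eta0 : R), 0 < K /\
  forall (eta : R), eta0 <= Rabs eta ->
  forall (lam : R), / C0 <= lam <= C0 ->
  forall (a : C), in_Lambda a -> Rpower (Rabs eta) (- (1 / 2)) < Cmod a ->
    Cmod (Cminus
      (Omega_int_outside
         (fun tau : C =>
            Cmult (cpow_pr tau (RtoC (- gamma)))
                  (cexp (Cminus (gfrak a (RtoC 1) eta lam) (gfrak a tau eta lam))))
         (Cst * Rpower (Rabs eta) (- (1 / 2))))
      (RtoC (1 / (2 * eta ^ 2))))
    <= K * Rpower (Rabs eta) (-3).
Proof.
  exists 1; intros Cst HC C0 _ gamma.
  exists (3 + 100 * exp (Rabs (2 - gamma))),
         (1000 + Rabs (2 - gamma) + (25 / Cst) ^ 2 + (3 * Cst) ^ 2).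
  split; [pose proof (exp_pos (Rabs (2 - gamma))); lra|].
  intros eta Heta lam _ a _ Ha; set (e := Rabs eta) in *.
  pose proof (pow2_ge_0 (25 / Cst)); pose proof (pow2_ge_0 (3 * Cst)).
  pose proof (Rabs_pos (2 - gamma)).
  assert (He : 1000 <= e) by lra.
  rewrite Rpower_neg_half, Rpower_neg_3 in * by lra.
  destruct (radius_bounds Cst e HC ltac:(lra)) as [Hrho HT].
  assert (Hb := Cmod_inv_2sq_le a e ltac:(lra) Ha).
  assert (Ha0 : a <> 0%C).
  { apply Cmod_gt_0; pose proof (Rinv_0_lt_compat _ (sqrt_lt_R0 e ltac:(lra))); lra. }
  assert (Hee : eta ^ 2 = e ^ 2) by (unfold e; now rewrite pow2_abs).
  replace (RtoC (1 / (2 * eta ^ 2))) with (/ RtoC (2 * e ^ 2))%C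
    by (rewrite Hee, <- RtoC_inv by nra; f_equal; field; lra).
  eapply Rle_trans; [apply (Omega_int_outside_sub_le (/ (2 * (a * a)))%C gamma e);
                       [lra | lra | exact Hb | exact Hrho | exact HT |] |].
  - intros t Ht; rewrite gfrak_sub_eq_phase, Hee; [reflexivity | exact Ha0 |].
    intro E; rewrite E in Ht; simpl in Ht; lra.
  - right; unfold Rdiv; reflexivity.
Qed.
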